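(* Let $\{X_s,\|\cdot\|_s\}_{s\in\mathbb N_0}$ be a sequence of Banach spaces satisfying (F1)–(F3) and $\{g_i\}_{i=1}^\infty\in(X_0^* )^{\mathbb N}$. Assume there is a sequence $\{f_i\}_{i=1}^\infty$ of nonzero elements of $X_F$ such that for every $s\in\mathbb N_0$ and every $f\in X_s$, $f=\sum_{i=1}^\infty g_i(f)f_i$ with convergence in $X_s$. Then there exists a sequence $\{\Theta_s\}_{s\in\mathbb N_0}$ of $CB$-spaces satisfying (F1)–(F3) such that $\{g_i|_{X_F}\}_{i=1}^\infty$ is an $F$-frame for $X_F$ with respect to $\Theta_F$, and $\{f_i\}$ is a $DF$-Bessel sequence for $X_F^*$ with respect to $\Theta_F^*$.
   Context: Conditions (F1)–(F3) for a sequence $\{Y_s,|\cdot|_s\}_{s\in\mathbb N_0}$ of separable Banach spaces: (F1) $\{0\}\neq\bigcap_sY_s\subseteq\dots\subseteq Y_1\subseteq Y_0$; (F2) $|\cdot|_0\le|\cdot|_1\le\dots$; (F3) $Y_F:=\bigcap_sY_s$ dense in each $Y_s$. $X_F=\bigcap_sX_s$, $\Theta_F=\bigcap_s\Theta_s$. $BK$-space: Banach sequence space with continuous coordinate functionals; $CB$-space: $BK$-space in which the canonical vectors $e_i$ form a Schauder basis. For a $CB$-space $\Theta$, $\Theta^*$ is identified with $\{\{g(e_i)\}:g\in\Theta^*\}$ normed by $\|g\|_{\Theta^*}$. For a Banach space $X$ and $BK$-space $\Theta$, $\{h_i\}\subset X^*$ is a $\Theta$-Bessel sequence for $X$ if $\{h_i(f)\}\in\Theta$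 and $|||\{h_i(f)\}|||\le B\|f\|$ for all $f\in X$ (applied to $\{f_i\}\subset X\subseteq X^{**}$ acting on $X^*$). $F$-frame for $X_F$ w.r.t. $\Theta_F$: $\{g_i\}\in(X_F^* )^{\mathbb N}$ with $\{g_i(f)\}\in\Theta_F$ for $f\in X_F$, constants $0<A_s\le B_s$ with $A_s\|f\|_s\le|||\{g_i(f)\}|||_s\le B_s\|f\|_s$ for all $s$ and $f\in X_F$, and an operator $V:\Theta_F\to X_F$ with $V(\{g_i(f)\})=f$ which is $F$-bounded ($\|Vc\|_s\le K_s|||c|||_s$ for each $s$). $\{f_i\}\in(X_F)^{\mathbb N}$ is a $DF$-Bessel sequence for $X_F^*$ w.r.t. $\Theta_F^*$ if it is a $\Theta_s^*$-Bessel sequence for $X_s^*$ for every $s$. *)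

(* real Banach spaces modelled as subspaces of an ambient real vector space. *)
From Stdlib Require Import Reals Lra FunctionalExtensionality.
Open Scope R_scope.

Record RVS := {
  vT :> Type;
  vzero : vT;
  vadd : vT -> vT -> vT;
  vopp : vT -> vT;
  vscal : R -> vT -> vT;
  vadd_assoc : forall x y z, vadd x (vadd y z) = vadd (vadd x y) z;
  vadd_comm : forall x y, vadd x y = vadd y x;
  vadd_0r : forall x, vadd x vzero = x;
  vadd_oppr : forall x, vadd x (vopp x) = vzero;
  vscal_assoc : forall a b x, vscal a (vscal b x) = vscal (a * b) x;
  vscal_1 : forall x, vscal 1 x = x;
  vscal_addv : forall a x y, vscal a (vadd x y) = vadd (vscal a x) (vscal a y);
  vscal_adds : forall a b x, vscal (a + b) x = vadd (vscal a x) (vscal b x)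
}.

Arguments vzero {_}.
Arguments vadd {_} _ _.
Arguments vopp {_} _.
Arguments vscal {_} _ _.

Definition vsub {V : RVS} (x y : V) : V := vadd x (vopp y).

Fixpoint vsum {V : RVS} (n : nat) (u : nat -> V) : V :=
  match n with
  | O => vzero
  | S k => vadd (vsum k u) (u k)
  end.

Definition seqR := nat -> R.

Definition seqRVS : RVS.
Proof.
  refine (@Build_RVS seqR (fun _ => 0) (fun x y i => x i + y i) (fun x i => - x i)
            (fun a x i => a * x i) _ _ _ _ _ _ _ _);
  intros; apply functional_extensionality; intros; ring.
Defined.

Definition e_can (i : nat) : seqRVS := fun j => if Nat.eqb i j then 1 else 0.

Section Normed.
Context {V : RVS}.

Definition subspace (P : V -> Prop) : Prop :=
  P vzero /\ (forall x y, P x -> P y -> P (vadd x y)) /\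
  (forall a x, P x -> P (vscal a x)).

Definition is_norm_on (P : V -> Prop) (N : V -> R) : Prop :=
  (forall x, P x -> 0 <= N x) /\
  (forall x, P x -> N x = 0 -> x = vzero) /\
  (forall a x, P x -> N (vscal a x) = Rabs a * N x) /\
  (forall x y, P x -> P y -> N (vadd x y) <= N x + N y).

Definition conv_in (N : V -> R) (u : nat -> V) (x : V) : Prop :=
  forall eps, 0 < eps -> exists n0, forall n, (n0 <= n)%nat -> N (vsub (u n) x) < eps.

Definition cauchy_in (N : V -> R) (u : nat -> V) : Prop :=
  forall eps, 0 < eps -> exists n0, forall n m, (n0 <= n)%nat -> (n0 <= m)%nat ->
    N (vsub (u n) (u m)) < eps.

Definition complete_in (P : V -> Prop) (N : V -> R) : Prop :=
  forall u : nat -> V, (forall n, P (u n)) -> cauchy_in N u ->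
    exists x, P x /\ conv_in N u x.

Definition separable_in (P : V -> Prop) (N : V -> R) : Prop :=
  exists d : nat -> V, (forall n, P (d n)) /\
    forall x, P x -> forall eps, 0 < eps -> exists n, N (vsub (d n) x) < eps.

Definition Banach (P : V -> Prop) (N : V -> R) : Prop :=
  subspace P /\ is_norm_on P N /\ complete_in P N.

Definition SepBanach (P : V -> Prop) (N : V -> R) : Prop :=
  Banach P N /\ separable_in P N.

Definition ContLinFun (P : V -> Prop) (N : V -> R) (h : V -> R) : Prop :=
  (forall x y, P x -> P y -> h (vadd x y) = h x + h y) /\
  (forall a x, P x -> h (vscal a x) = a * h x) /\
  (exists C, forall x, P x -> Rabs (h x) <= C * N x).

Definition opnorm_le (P : V -> Prop) (N : V -> R) (h : V -> R) (M : R) : Prop :=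
  forall x, P x -> Rabs (h x) <= M * N x.

Definition Fsequence (P : nat -> V -> Prop) (N : nat -> V -> R) : Prop :=
  (forall s, SepBanach (P s) (N s)) /\
  (forall s x, P (S s) x -> P s x) /\
  (exists x, x <> vzero /\ forall s, P s x) /\
  (forall s x, P (S s) x -> N s x <= N (S s) x) /\
  (forall s x, P s x -> forall eps, 0 < eps ->
     exists y, (forall t, P t y) /\ N s (vsub y x) < eps).

Definition inF (P : nat -> V -> Prop) (x : V) : Prop := forall s, P s x.

End Normed.

Definition BKspace (T : seqRVS -> Prop) (Nt : seqRVS -> R) : Prop :=
  Banach T Nt /\
  forall i : nat, exists C, forall c, T c -> Rabs (c i) <= C * Nt c.

Definition SchauderBasis {V : RVS} (P : V -> Prop) (N : V -> R) (b : nat -> V) : Prop :=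
  (forall i, P (b i)) /\
  forall x, P x -> exists! a : nat -> R,
    conv_in N (fun n => vsum n (fun i => vscal (a i) (b i))) x.

Definition CBspace (T : seqRVS -> Prop) (Nt : seqRVS -> R) : Prop :=
  BKspace T Nt /\ SchauderBasis T Nt e_can.

Definition CBFsequence (T : nat -> seqRVS -> Prop) (Nt : nat -> seqRVS -> R) : Prop :=
  (forall s, CBspace (T s) (Nt s)) /\ Fsequence T Nt.

Definition FFrame {V : RVS} (P : nat -> V -> Prop) (N : nat -> V -> R)
    (T : nat -> seqRVS -> Prop) (Nt : nat -> seqRVS -> R) (g : nat -> V -> R) : Prop :=
  (* each g_i restricted to X_F is in X_F^* (continuous linear on the Frechet space X_F) *)
  (forall i, (forall x y, inF P x -> inF P y -> g i (vadd x y) = g i x + g i y) /\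
             (forall a x, inF P x -> g i (vscal a x) = a * g i x) /\
             (exists s C, forall x, inF P x -> Rabs (g i x) <= C * N s x)) /\
  (forall f, inF P f -> inF T (fun i => g i f)) /\
  (forall s, exists A B, 0 < A /\ A <= B /\
     forall f, inF P f ->
       A * N s f <= Nt s (fun i => g i f) /\ Nt s (fun i => g i f) <= B * N s f) /\
  (exists Vop : seqRVS -> V,
     (forall c d, inF T c -> inF T d -> Vop (vadd c d) = vadd (Vop c) (Vop d)) /\
     (forall a c, inF T c -> Vop (vscal a c) = vscal a (Vop c)) /\
     (forall c, inF T c -> inF P (Vop c)) /\
     (forall f, inF P f -> Vop (fun i => g i f) = f) /\
     (forall s, exists K, forall c, inF T c -> N s (Vop c) <= K * Nt s c)).

(** {f_i} is a Theta^*-Bessel sequence for X^*, where Theta^* is identified with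
    {(g(e_i))_i : g in Theta^*} normed by the operator norm of g. *)
Definition ThetaDualBessel {V : RVS} (P : V -> Prop) (N : V -> R)
    (T : seqRVS -> Prop) (Nt : seqRVS -> R) (f : nat -> V) : Prop :=
  exists B, forall h : V -> R, ContLinFun P N h ->
    exists gt : seqRVS -> R, ContLinFun T Nt gt /\
      (forall i, gt (e_can i) = h (f i)) /\
      (forall M, 0 <= M -> opnorm_le P N h M -> opnorm_le T Nt gt (B * M)).

Definition DFBessel {V : RVS} (P : nat -> V -> Prop) (N : nat -> V -> R)
    (T : nat -> seqRVS -> Prop) (Nt : nat -> seqRVS -> R) (f : nat -> V) : Prop :=
  forall s, ThetaDualBessel (P s) (N s) (T s) (Nt s) f.

From Stdlib Require Import Reals Lra Lia Arith ZArith Cantor.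
From Stdlib Require Import FunctionalExtensionality ClassicalEpsilon Classical.
Open Scope R_scope.

(** For one Banach space (X, ||.||) and nonzero vectors f_i of X, the coefficient space
    Θ = { c | Σ c_i f_i converges in X }, normed by |||c||| = sup_n ||Σ_(i<n) c_i f_i||,
    is a separable CB-space (finitely supported rational sequences are dense, the
    coordinates are controlled by |c_i| ||f_i|| <= 2 |||c|||), and the synthesis map
    c |-> Σ c_i f_i is linear from Θ to X, of norm at most 1, and sends e_i to f_i.
    Taking Θ_s to be the coefficient space of X_s gives a CB-sequence with (F1)-(F3).
    The analysis map f |-> (g_i(f))_i is bounded below by 1 since ||f||_s is the limit of
    the partial sums, and bounded above because the partial sum operators are uniformly
    bounded on X_s: this is the uniform boundedness principle, proved below by Sokal's
    gliding hump argument.  Finally h |-> h ∘ (synthesis) shows that {f_i} is DF-Bessel. *)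

Arguments vadd_assoc {_} _ _ _.
Arguments vadd_comm {_} _ _.
Arguments vadd_0r {_} _.
Arguments vadd_oppr {_} _.
Arguments vscal_assoc {_} _ _ _.
Arguments vscal_1 {_} _.
Arguments vscal_addv {_} _ _ _.
Arguments vscal_adds {_} _ _ _.

Section VectorAlgebra.
Context {V : RVS}.
Implicit Types x y z w : V.

Lemma vadd_0l x : vadd vzero x = x.
Proof. rewrite vadd_comm; apply vadd_0r. Qed.

Lemma vadd_oppl x : vadd (vopp x) x = vzero.
Proof. rewrite vadd_comm; apply vadd_oppr. Qed.

Lemma vadd_cancel x y z : vadd x y = vadd x z -> y = z.
Proof.
  intros H. rewrite <- (vadd_0l y), <- (vadd_0l z), <- (vadd_oppl x),
    <- !vadd_assoc, H. reflexivity.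
Qed.

Lemma vscal_0l x : vscal 0 x = vzero.
Proof.
  apply (vadd_cancel (vscal 0 x)). rewrite vadd_0r, <- vscal_adds.
  f_equal; ring.
Qed.

Lemma vscal_0r a : vscal a (@vzero V) = vzero.
Proof.
  apply (vadd_cancel (vscal a vzero)). rewrite vadd_0r, <- vscal_addv, vadd_0r.
  reflexivity.
Qed.

Lemma vopp_scal x : vopp x = vscal (-1) x.
Proof.
  apply (vadd_cancel x). rewrite vadd_oppr.
  rewrite <- (vscal_1 x) at 1. rewrite <- vscal_adds.
  replace (1 + -1) with 0 by ring. now rewrite vscal_0l.
Qed.

Lemma vsub_scal x y : vsub x y = vadd x (vscal (-1) y).
Proof. unfold vsub; now rewrite vopp_scal. Qed.

Lemma vadd_ACs x y z w : vadd (vadd x y) (vadd z w) = vadd (vadd x z) (vadd y w).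
Proof.
  rewrite <- !vadd_assoc. f_equal. rewrite !vadd_assoc. f_equal. apply vadd_comm.
Qed.

Lemma vsub_self x : vsub x x = vzero.
Proof. apply vadd_oppr. Qed.

Lemma vsub_0r x : vsub x vzero = x.
Proof. rewrite vsub_scal, vscal_0r; apply vadd_0r. Qed.

Lemma vsub_add x y z w : vsub (vadd x y) (vadd z w) = vadd (vsub x z) (vsub y w).
Proof. rewrite !vsub_scal, vscal_addv. apply vadd_ACs. Qed.

Lemma vscal_sub a x y : vsub (vscal a x) (vscal a y) = vscal a (vsub x y).
Proof.
  rewrite !vsub_scal, vscal_addv, !vscal_assoc. f_equal. f_equal. ring.
Qed.

Lemma vsub_scals a b x : vsub (vscal a x) (vscal b x) = vscal (a - b) x.
Proof. rewrite vsub_scal, vscal_assoc, <- vscal_adds. f_equal; ring. Qed.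

Lemma vsub_chain x y z : vsub x z = vadd (vsub x y) (vsub y z).
Proof.
  unfold vsub. rewrite <- vadd_assoc, (vadd_assoc (vopp y)), vadd_oppl, vadd_0l.
  reflexivity.
Qed.

Lemma vsub_swap x y : vsub y x = vscal (-1) (vsub x y).
Proof.
  rewrite !vsub_scal, vscal_addv, vscal_assoc. replace (-1 * -1) with 1 by ring.
  rewrite vscal_1. apply vadd_comm.
Qed.

Lemma vsub_addK x y : vsub (vadd x y) x = y.
Proof.
  rewrite vsub_scal, (vadd_comm x y), <- vadd_assoc, <- (vscal_1 x) at 1.
  rewrite <- vscal_adds. replace (1 + -1) with 0 by ring. rewrite vscal_0l. apply vadd_0r.
Qed.

Lemma vsub_add_sub x y : vsub (vadd x y) (vsub x y) = vscal 2 y.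
Proof.
  rewrite (vsub_scal x y), vsub_add, vsub_self, vadd_0l, vsub_scal, vscal_assoc.
  rewrite <- (vscal_1 y) at 1. rewrite <- vscal_adds. f_equal; ring.
Qed.

Lemma vsum_ext n (u v : nat -> V) :
  (forall i, (i < n)%nat -> u i = v i) -> vsum n u = vsum n v.
Proof.
  induction n; simpl; intros H; auto.
  rewrite IHn by (intros; apply H; lia). now rewrite H by lia.
Qed.

Lemma vsum_add n (u v : nat -> V) :
  vsum n (fun i => vadd (u i) (v i)) = vadd (vsum n u) (vsum n v).
Proof. induction n; simpl. now rewrite vadd_0r. rewrite IHn. apply vadd_ACs. Qed.

Lemma vsum_scal n a (u : nat -> V) : vsum n (fun i => vscal a (u i)) = vscal a (vsum n u).
Proof. induction n; simpl. now rewrite vscal_0r. now rewrite IHn, vscal_addv. Qed.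

Lemma vsum_zero n : vsum n (fun _ => @vzero V) = vzero.
Proof. induction n; simpl; auto. rewrite IHn; apply vadd_0r. Qed.

End VectorAlgebra.

Fixpoint rsum (n : nat) (w : nat -> R) : R :=
  match n with O => 0 | S k => rsum k w + w k end.

Lemma rsum_le n w1 w2 : (forall i, (i < n)%nat -> w1 i <= w2 i) -> rsum n w1 <= rsum n w2.
Proof.
  induction n; simpl; intros H. lra.
  assert (rsum n w1 <= rsum n w2) by (apply IHn; intros; apply H; lia).
  assert (w1 n <= w2 n) by (apply H; lia). lra.
Qed.

Lemma rsum_nonneg n w : (forall i, 0 <= w i) -> 0 <= rsum n w.
Proof. induction n; simpl; intros H. lra. specialize (IHn H). specialize (H n). lra. Qed.

Lemma rsum_term n w i : (forall j, 0 <= w j) -> (i < n)%nat -> w i <= rsum n w.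
Proof.
  induction n; simpl; intros H Hi. lia.
  pose proof (rsum_nonneg n w H). destruct (Nat.eq_dec i n) as [->|Hne]. lra.
  assert (w i <= rsum n w) by (apply IHn; auto; lia). specialize (H n). lra.
Qed.

Lemma rsum_const K a : rsum K (fun _ => a) = INR K * a.
Proof. induction K. simpl; ring. cbn [rsum]. rewrite IHK, S_INR. ring. Qed.

Lemma rsum_support n K w : (forall i, 0 <= w i) -> (forall i, (K <= i)%nat -> w i = 0) ->
  rsum n w <= rsum K w.
Proof.
  intros Hw HK. destruct (le_lt_dec n K) as [Hle|Hlt].
  - clear HK. induction Hle. lra. simpl. specialize (Hw m). lra.
  - induction Hlt. simpl. rewrite HK by lia. lra. simpl. rewrite HK by lia. lra.
Qed.

Lemma Rabs_m1 : Rabs (-1) = 1.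
Proof. unfold Rabs; destruct Rcase_abs; lra. Qed.

Lemma frac_le1 x : 0 <= x -> x / (x + 1) <= 1.
Proof.
  intros Hx. apply (Rmult_le_reg_r (x + 1)). lra.
  replace (x / (x + 1) * (x + 1)) with x by (field; lra). lra.
Qed.

Section Subspace.
Context {V : RVS} {P : V -> Prop} (HP : subspace P).

Lemma P0 : P vzero. Proof. apply HP. Qed.
Lemma Padd x y : P x -> P y -> P (vadd x y). Proof. apply HP. Qed.
Lemma Pscal a x : P x -> P (vscal a x). Proof. apply HP. Qed.
Lemma Psub x y : P x -> P y -> P (vsub x y).
Proof. intros; rewrite vsub_scal; apply Padd; auto; apply Pscal; auto. Qed.
Lemma Psum n u : (forall i, (i < n)%nat -> P (u i)) -> P (vsum n u).
Proof.
  induction n; simpl; intros H. apply P0.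
  apply Padd. apply IHn; intros; apply H; lia. apply H; lia.
Qed.

End Subspace.

Ltac in_subspace HP :=
  match goal with
  | |- _ (vsub _ _) => apply (Psub HP)
  | |- _ (vadd _ _) => apply (Padd HP)
  | |- _ (vscal _ _) => apply (Pscal HP)
  | |- _ vzero => apply (P0 HP)
  end.

Definition normed_space {V : RVS} (P : V -> Prop) (N : V -> R) : Prop :=
  subspace P /\ is_norm_on P N.

Lemma Banach_normed {V : RVS} (P : V -> Prop) (N : V -> R) :
  Banach P N -> normed_space P N.
Proof. intros [HP [HN _]]; split; auto. Qed.

Section NormedSpace.
Context {V : RVS} {P : V -> Prop} {N : V -> R} (HX : normed_space P N).
Let HP : subspace P := proj1 HX.
Local Hint Extern 1 => in_subspace HP : core.

Lemma Nnn x : P x -> 0 <= N x. Proof. apply HX. Qed.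
Lemma Ndef x : P x -> N x = 0 -> x = vzero. Proof. apply HX. Qed.
Lemma Nscal a x : P x -> N (vscal a x) = Rabs a * N x. Proof. apply HX. Qed.
Lemma Ntri x y : P x -> P y -> N (vadd x y) <= N x + N y. Proof. apply HX. Qed.

Lemma Nzero : N vzero = 0.
Proof. rewrite <- (vscal_0l vzero), Nscal by auto. rewrite Rabs_R0; ring. Qed.

Lemma Nsym x y : P x -> P y -> N (vsub x y) = N (vsub y x).
Proof. intros. rewrite (vsub_swap y x), Nscal by auto. rewrite Rabs_m1; ring. Qed.

Lemma Nchain x y z : P x -> P y -> P z -> N (vsub x z) <= N (vsub x y) + N (vsub y z).
Proof. intros. rewrite (vsub_chain x y z). apply Ntri; auto. Qed.

Lemma Nle_sub x y : P x -> P y -> N x <= N y + N (vsub x y).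
Proof.
  intros. pose proof (Nchain x y vzero ltac:(auto) ltac:(auto) ltac:(auto)) as H1.
  rewrite !vsub_0r in H1. lra.
Qed.

Lemma Nsub_le x y : P x -> P y -> N (vsub x y) <= N x + N y.
Proof.
  intros. rewrite vsub_scal. eapply Rle_trans. apply Ntri; auto.
  rewrite Nscal, Rabs_m1 by auto. lra.
Qed.

Lemma Nsum n u : (forall i, (i < n)%nat -> P (u i)) ->
  N (vsum n u) <= rsum n (fun i => N (u i)).
Proof.
  induction n; simpl; intros H. rewrite Nzero; lra.
  assert (P (vsum n u)) by (apply (Psum HP); intros; apply H; lia).
  assert (N (vsum n u) <= rsum n (fun i => N (u i))) by (apply IHn; intros; apply H; lia).
  pose proof (Ntri _ _ H0 (H n ltac:(lia))). lra.
Qed.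

Lemma conv_unique u x y : (forall n, P (u n)) -> P x -> P y ->
  conv_in N u x -> conv_in N u y -> x = y.
Proof.
  intros Hu Hx Hy Cx Cy. apply (vadd_cancel (vopp y)).
  rewrite vadd_oppl, vadd_comm. fold (vsub x y). apply Ndef; auto.
  destruct (Rle_lt_or_eq_dec _ _ (Nnn (vsub x y) ltac:(auto))) as [Hlt|Heq]; [|auto].
  exfalso. set (e := N (vsub x y)) in *.
  destruct (Cx (e/2)) as [n1 H1]. lra. destruct (Cy (e/2)) as [n2 H2]. lra.
  specialize (H1 (max n1 n2) ltac:(lia)). specialize (H2 (max n1 n2) ltac:(lia)).
  pose proof (Nchain x (u (max n1 n2)) y Hx (Hu _) Hy) as H.
  rewrite (Nsym x (u _)) in H by auto. fold e in H. lra.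
Qed.

Lemma conv_le u x z r n0 : (forall n, P (u n)) -> P x -> P z -> conv_in N u x ->
  (forall n, (n0 <= n)%nat -> N (vsub (u n) z) <= r) -> N (vsub x z) <= r.
Proof.
  intros Hu Hx Hz Cx H. apply Rnot_lt_le; intro Hlt.
  destruct (Cx (N (vsub x z) - r)) as [n1 H1]. lra.
  specialize (H1 (max n0 n1) ltac:(lia)). specialize (H (max n0 n1) ltac:(lia)).
  pose proof (Nchain x (u (max n0 n1)) z Hx (Hu _) Hz) as H0.
  rewrite (Nsym x (u _)) in H0 by auto. lra.
Qed.

Lemma conv_le0 u x r : (forall n, P (u n)) -> P x -> conv_in N u x ->
  (forall n, N (u n) <= r) -> N x <= r.
Proof.
  intros. rewrite <- (vsub_0r x). apply (conv_le u x vzero r O); auto.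
  intros. rewrite vsub_0r; auto.
Qed.

Lemma conv_cauchy u x : (forall n, P (u n)) -> P x -> conv_in N u x -> cauchy_in N u.
Proof.
  intros Hu Hx C e He. destruct (C (e/2)) as [n0 H0]. lra. exists n0. intros n m Hn Hm.
  pose proof (Nchain (u n) x (u m) (Hu n) Hx (Hu m)) as H.
  rewrite (Nsym x (u m)) in H by auto. pose proof (H0 n Hn). pose proof (H0 m Hm). lra.
Qed.

Lemma conv_add u v x y : (forall n, P (u n)) -> (forall n, P (v n)) -> P x -> P y ->
  conv_in N u x -> conv_in N v y -> conv_in N (fun n => vadd (u n) (v n)) (vadd x y).
Proof.
  intros Hu Hv Hx Hy Cu Cv e He. destruct (Cu (e/2)) as [n1 H1]. lra.
  destruct (Cv (e/2)) as [n2 H2]. lra. exists (max n1 n2). intros n Hn.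
  rewrite vsub_add. eapply Rle_lt_trans. apply Ntri; auto.
  specialize (H1 n ltac:(lia)). specialize (H2 n ltac:(lia)). lra.
Qed.

Lemma conv_scal a u x : (forall n, P (u n)) -> P x ->
  conv_in N u x -> conv_in N (fun n => vscal a (u n)) (vscal a x).
Proof.
  intros Hu Hx Cu e He. pose proof (Rabs_pos a).
  destruct (Cu (e / (Rabs a + 1))) as [n1 H1]. apply Rdiv_lt_0_compat; lra.
  exists n1. intros n Hn. rewrite vscal_sub, Nscal by auto.
  specialize (H1 n Hn). pose proof (Nnn (vsub (u n) x) ltac:(auto)).
  apply (Rmult_lt_compat_l (Rabs a + 1)) in H1; [|lra].
  replace ((Rabs a + 1) * (e / (Rabs a + 1))) with e in H1 by (field; lra). nra.
Qed.

Lemma conv_const x : P x -> conv_in N (fun _ => x) x.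
Proof. intros Hx e He; exists O; intros. rewrite vsub_self, Nzero; lra. Qed.

Lemma geometric_limit (xs : nat -> V) : complete_in P N -> (forall k, P (xs k)) ->
  (forall k, N (vsub (xs (S k)) (xs k)) <= (/3) ^ k) ->
  exists X, P X /\ forall k, N (vsub X (xs k)) <= 3/2 * (/3) ^ k.
Proof.
  intros Hcomp HxP Hstep. set (q := fun k : nat => (/3) ^ k).
  assert (Hq : forall k, 0 < q k) by (intros; apply pow_lt; lra).
  assert (Htail : forall k p, N (vsub (xs (p + k)%nat) (xs k)) <= 3/2 * q k * (1 - q p)).
  { intros k p. induction p.
    - simpl. rewrite vsub_self, Nzero. unfold q; simpl. lra.
    - simpl plus. eapply Rle_trans. apply (Nchain _ (xs (p + k)%nat)); auto.
      pose proof (Hstep (p + k)%nat) as H.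
      replace ((/3) ^ (p + k)) with (q p * q k) in H by (unfold q; now rewrite pow_add).
      replace (q (S p)) with (/3 * q p) by reflexivity. lra. }
  assert (Hfar : forall k m, (k <= m)%nat -> N (vsub (xs m) (xs k)) <= 3/2 * q k).
  { intros k m Hkm. replace m with ((m - k) + k)%nat by lia. eapply Rle_trans. apply Htail.
    pose proof (Hq k). pose proof (Hq (m - k)%nat). nra. }
  assert (Hcau : cauchy_in N xs).
  { intros e He.
    destruct (pow_lt_1_zero (/3) ltac:(rewrite Rabs_right; lra) (e / 3) ltac:(lra)) as [k0 Hk0].
    exists k0. intros n m Hn Hm. eapply Rle_lt_trans. apply (Nchain _ (xs k0)); auto.
    rewrite (Nsym (xs k0)) by auto. pose proof (Hfar k0 n Hn). pose proof (Hfar k0 m Hm).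
    specialize (Hk0 k0 (le_n _)). rewrite Rabs_right in Hk0 by (left; apply (Hq k0)).
    fold (q k0) in Hk0. lra. }
  destruct (Hcomp xs HxP Hcau) as [X [HXP CX]]. exists X. split; auto.
  intros k. apply (conv_le xs X (xs k) _ k); auto.
Qed.

End NormedSpace.

Lemma conv_eventually {V : RVS} (N : V -> R) u v x :
  (exists n0, forall n, (n0 <= n)%nat -> u n = v n) -> conv_in N u x -> conv_in N v x.
Proof.
  intros [n0 H0] C e He. destruct (C e He) as [n1 H1]. exists (max n0 n1).
  intros n Hn. rewrite <- H0 by lia. apply H1; lia.
Qed.

(** The supremum of a real sequence (0 if it is unbounded above). *)
Definition supn (u : nat -> R) : R :=
  match excluded_middle_informative (exists M, forall n, u n <= M) with
  | left H => proj1_sig (completeness (fun r => exists n, r = u n)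
                 (let (M, HM) := H in ex_intro _ M (fun r (Hr : exists n, r = u n) =>
                    let (n, Hn) := Hr in eq_ind_r (fun r => r <= M) (HM n) Hn))
                 (ex_intro _ (u O) (ex_intro _ O eq_refl)))
  | right _ => 0
  end.

Lemma supn_ub u n : (exists M, forall n, u n <= M) -> u n <= supn u.
Proof.
  intros H. unfold supn. destruct excluded_middle_informative as [H'|H']; [|contradiction].
  destruct completeness as [m [Hm1 Hm2]]. simpl. apply Hm1. now exists n.
Qed.

Lemma supn_le u M : (forall n, u n <= M) -> supn u <= M.
Proof.
  intros H. unfold supn. destruct excluded_middle_informative as [H'|H'].
  - destruct completeness as [m [Hm1 Hm2]]. simpl. apply Hm2. intros r [n ->]. auto.
  - exfalso. apply H'. eauto.
Qed.

Lemma supn_scal a u : 0 <= a -> (exists M, forall n, u n <= M) ->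
  supn (fun n => a * u n) = a * supn u.
Proof.
  intros Ha Hb. assert (Hb' : exists M, forall n, a * u n <= M).
  { destruct Hb as [M HM]. exists (a * M). intros; apply Rmult_le_compat_l; auto. }
  apply Rle_antisym.
  - apply supn_le. intros n. apply Rmult_le_compat_l; auto. apply supn_ub; auto.
  - destruct (Rle_lt_or_eq_dec _ _ Ha) as [Hp|<-].
    + assert (supn u <= / a * supn (fun n => a * u n)).
      { apply supn_le. intros n. pose proof (supn_ub (fun n => a * u n) n Hb').
        apply (Rmult_le_reg_l a); auto. rewrite <- Rmult_assoc, Rinv_r; lra. }
      apply (Rmult_le_compat_l a) in H; [|lra]. rewrite <- Rmult_assoc, Rinv_r in H; lra.
    + rewrite Rmult_0_l. pose proof (supn_ub (fun n => 0 * u n) O Hb'). simpl in H. lra.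
Qed.

(** The proof (A. Sokal's "really simple
    elementary proof") builds a point X = Σ ±3^-k y_k where T_(n_k) is large at y_k. *)
Section UniformBoundedness.
Context {V W : RVS} {P : V -> Prop} {N : V -> R} {Q : W -> Prop} {M : W -> R}.
Hypothesis HX : normed_space P N.
Hypothesis Hcomp : complete_in P N.
Hypothesis HY : normed_space Q M.
Variable T : nat -> V -> W.
Hypothesis T_in : forall n x, P x -> Q (T n x).
Hypothesis T_add : forall n x y, P x -> P y -> T n (vadd x y) = vadd (T n x) (T n y).
Hypothesis T_scal : forall n a x, P x -> T n (vscal a x) = vscal a (T n x).
Hypothesis T_bounded : forall n, exists L, forall x, P x -> M (T n x) <= L * N x.
Hypothesis T_pointwise : forall x, P x -> exists C, forall n, M (T n x) <= C.

Let HP : subspace P := proj1 HX.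
Let HQ : subspace Q := proj1 HY.
Local Hint Extern 1 => in_subspace HP : core.
Local Hint Extern 1 => in_subspace HQ : core.
Local Hint Resolve T_in : core.

Lemma T_sub n x y : P x -> P y -> T n (vsub x y) = vsub (T n x) (T n y).
Proof. intros. rewrite !vsub_scal, T_add, T_scal by auto. reflexivity. Qed.

Lemma T_zero n : T n vzero = vzero.
Proof. rewrite <- (vscal_0l vzero), T_scal by auto. apply vscal_0l. Qed.

Definition unit_image (n : nat) (r : R) : Prop :=
  exists x, P x /\ N x <= 1 /\ r = M (T n x).

Lemma unit_image_bound n : bound (unit_image n).
Proof.
  destruct (T_bounded n) as [L HL]. exists (Rabs L). intros r [x [Hx [H1 ->]]].
  specialize (HL x Hx). pose proof (Nnn HX x Hx). pose proof (Rle_abs L).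
  pose proof (Rabs_pos L). nra.
Qed.

Lemma unit_image_inhabited n : exists r, unit_image n r.
Proof. exists (M (T n vzero)), vzero. rewrite (Nzero HX). split; [auto|split; [lra|auto]]. Qed.

Definition opnorm (n : nat) : R :=
  proj1_sig (completeness (unit_image n) (unit_image_bound n) (unit_image_inhabited n)).

Lemma opnorm_lub n : is_lub (unit_image n) (opnorm n).
Proof. unfold opnorm. destruct completeness; simpl; auto. Qed.

Lemma opnorm_nn n : 0 <= opnorm n.
Proof.
  apply (proj1 (opnorm_lub n)). exists vzero.
  rewrite T_zero, (Nzero HX), (Nzero HY). split; [auto|split; lra].
Qed.

Lemma opnorm_bound n x : P x -> M (T n x) <= opnorm n * N x.
Proof.
  intros Hx. destruct (Rle_lt_or_eq_dec _ _ (Nnn HX x Hx)) as [Hp|He].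
  - assert (Hinv : 0 < / N x) by (apply Rinv_0_lt_compat; auto).
    assert (Hunit : M (T n (vscal (/ N x) x)) <= opnorm n).
    { apply (proj1 (opnorm_lub n)). exists (vscal (/ N x) x). split; [auto|split; auto].
      rewrite (Nscal HX), Rabs_right, Rinv_l by (auto || lra). lra. }
    rewrite T_scal, (Nscal HY), Rabs_right in Hunit by (auto || lra).
    apply (Rmult_le_compat_l (N x)) in Hunit; [|lra].
    rewrite <- Rmult_assoc, Rinv_r in Hunit; lra.
  - symmetry in He. apply (Ndef HX) in He; auto. subst.
    rewrite T_zero, (Nzero HY), (Nzero HX). lra.
Qed.

Lemma opnorm_approx n : 0 < opnorm n ->
  exists x, P x /\ N x <= 1 /\ 2/3 * opnorm n < M (T n x).
Proof.
  intros Hp. apply NNPP. intros Hn.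
  assert (opnorm n <= 2/3 * opnorm n).
  { apply (proj2 (opnorm_lub n)). intros r [x [Hx [H1 ->]]].
    apply Rnot_lt_le. intros Hlt. apply Hn. exists x; auto. }
  lra.
Qed.

Definition hump_step (n : nat) (x y : V) : V :=
  if Rle_dec (M (T n (vsub x y))) (M (T n (vadd x y))) then vadd x y else vsub x y.

Lemma hump_step_in n x y : P x -> P y -> P (hump_step n x y).
Proof. intros. unfold hump_step. destruct Rle_dec; auto. Qed.

Lemma hump_step_dist n x y : P x -> P y -> N (vsub (hump_step n x y) x) = N y.
Proof.
  intros. unfold hump_step. destruct Rle_dec.
  - now rewrite vsub_addK.
  - rewrite (vsub_scal x y), vsub_addK, (Nscal HX), Rabs_m1 by auto. ring.
Qed.

Lemma hump_step_large n x y : P x -> P y -> M (T n y) <= M (T n (hump_step n x y)).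
Proof.
  intros Hx Hy.
  assert (Hsum : 2 * M (T n y) <= M (T n (vadd x y)) + M (T n (vsub x y))).
  { rewrite <- (Rabs_right 2), <- (Nscal HY) by (auto || lra).
    rewrite <- (T_scal n 2 y), <- (vsub_add_sub x y), T_sub by auto. apply (Nsub_le HY); auto. }
  unfold hump_step. destruct Rle_dec; lra.
Qed.

Lemma gliding_hump (nk : nat -> nat) (y : nat -> V) :
  (forall k, P (y k)) -> (forall k, N (y k) <= (/3) ^ k) ->
  exists X, P X /\ forall k,
    M (T (nk k) (y k)) - opnorm (nk k) * (1/2 * (/3) ^ k) <= M (T (nk k) X).
Proof.
  intros HyP Hy. set (xs := fix xs k := match k with O => vzero | S k' =>
    hump_step (nk k') (xs k') (y k') end).
  assert (HxP : forall k, P (xs k)).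
  { induction k; simpl; auto. apply hump_step_in; auto. }
  assert (Hstep : forall k, N (vsub (xs (S k)) (xs k)) <= (/3) ^ k).
  { intros k. simpl. rewrite hump_step_dist; auto. }
  destruct (geometric_limit HX xs Hcomp HxP Hstep) as [X [HXP HXk]].
  exists X. split; auto. intros k.
  assert (Hnear : N (vsub X (xs (S k))) <= 1/2 * (/3) ^ k).
  { specialize (HXk (S k)).
    now replace (1/2 * (/3) ^ k) with (3/2 * (/3) ^ S k) by (simpl; field). }
  pose proof (hump_step_large (nk k) (xs k) (y k) (HxP k) (HyP k)) as Hlarge.
  pose proof (Nle_sub HY (T (nk k) (xs (S k))) (T (nk k) X) ltac:(auto) ltac:(auto)) as Hrev.
  rewrite (Nsym HY), <- T_sub in Hrev by auto.
  pose proof (opnorm_bound (nk k) (vsub X (xs (S k))) ltac:(auto)).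
  pose proof (Rmult_le_compat_l _ _ _ (opnorm_nn (nk k)) Hnear).
  change (hump_step (nk k) (xs k) (y k)) with (xs (S k)) in Hlarge. lra.
Qed.

Lemma scaled_hump n r : 0 < r -> 0 < opnorm n ->
  exists y, P y /\ N y <= r /\ 2/3 * opnorm n * r < M (T n y).
Proof.
  intros Hr Hn. destruct (opnorm_approx n Hn) as [z [Hz [Hz1 Hz2]]].
  exists (vscal r z). split; [auto|split].
  - rewrite (Nscal HX), Rabs_right by (auto || lra). nra.
  - rewrite T_scal, (Nscal HY), Rabs_right by (auto || lra). nra.
Qed.

Lemma opnorm_bounded : exists K, forall n, opnorm n <= K.
Proof.
  apply NNPP. intros Hunb. set (q := fun k : nat => (/3) ^ k).
  assert (Hq : forall k, 0 < q k) by (intros; apply pow_lt; lra).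
  assert (Hhump : forall k, {ny : nat * V | 6 * (INR k + 1) < opnorm (fst ny) * q k /\
    P (snd ny) /\ N (snd ny) <= q k /\ 2/3 * opnorm (fst ny) * q k < M (T (fst ny) (snd ny))}).
  { intros k. apply constructive_indefinite_description.
    assert (Hn : exists n, 6 * (INR k + 1) / q k < opnorm n).
    { apply NNPP. intros Hne. apply Hunb. exists (6 * (INR k + 1) / q k). intros n.
      apply Rnot_lt_le. intros Hlt. apply Hne. eauto. }
    destruct Hn as [n Hn]. pose proof (Hq k). pose proof (pos_INR k).
    assert (Hbig : 6 * (INR k + 1) < opnorm n * q k).
    { apply (Rmult_lt_compat_r (q k)) in Hn; auto.
      replace (6 * (INR k + 1) / q k * q k) with (6 * (INR k + 1)) in Hn by (field; lra). auto. }
    destruct (scaled_hump n (q k)) as [y Hy]; auto.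
    { pose proof (opnorm_nn n). nra. }
    exists (n, y). simpl. auto. }
  set (nk := fun k => fst (proj1_sig (Hhump k))). set (y := fun k => snd (proj1_sig (Hhump k))).
  assert (Hspec : forall k, 6 * (INR k + 1) < opnorm (nk k) * q k /\ P (y k) /\
    N (y k) <= q k /\ 2/3 * opnorm (nk k) * q k < M (T (nk k) (y k)))
    by (intros; apply (proj2_sig (Hhump k))).
  destruct (gliding_hump nk y) as [X [HXP HX_large]]; try apply Hspec.
  destruct (T_pointwise X HXP) as [C HC]. destruct (INR_unbounded C) as [k Hk].
  specialize (HX_large k). specialize (HC (nk k)). specialize (Hspec k).
  fold (q k) in HX_large. lra.
Qed.

Theorem uniform_boundedness : exists B, forall n x, P x -> M (T n x) <= B * N x.
Proof.
  destruct opnorm_bounded as [K HK]. exists K. intros n x Hx.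
  eapply Rle_trans. apply opnorm_bound; auto.
  apply Rmult_le_compat_r. apply (Nnn HX); auto. apply HK.
Qed.

End UniformBoundedness.

(** * A countable family of finitely supported sequences, dense coordinatewise *)

Definition rat_of (k : nat) : R :=
  let (u, w) := Cantor.of_nat k in
  let (p, q) := Cantor.of_nat w in (INR p - INR q) / (INR u + 1).

Lemma int_as_nat_diff (z : Z) : exists p q : nat, IZR z = INR p - INR q.
Proof.
  destruct (Z_le_gt_dec 0 z).
  - exists (Z.to_nat z), O. rewrite (INR_IZR_INZ (Z.to_nat z)), Z2Nat.id by auto. simpl. ring.
  - exists O, (Z.to_nat (- z)). rewrite (INR_IZR_INZ (Z.to_nat (- z))), Z2Nat.id by lia.
    simpl. rewrite opp_IZR. ring.
Qed.

Lemma rat_of_dense r e : 0 < e -> exists k, Rabs (rat_of k - r) < e.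
Proof.
  intros He. destruct (INR_unbounded (/ e)) as [u Hu]. pose proof (pos_INR u) as Hu0.
  set (z := up (r * (INR u + 1))). destruct (archimed (r * (INR u + 1))) as [H1 H2].
  destruct (int_as_nat_diff z) as [p [q Hpq]].
  exists (Cantor.to_nat (u, Cantor.to_nat (p, q))). unfold rat_of.
  rewrite !Cantor.cancel_of_to, <- Hpq. fold z in H1, H2.
  assert (Hl : / (INR u + 1) < e).
  { apply Rlt_le_trans with (/ (/ e)). apply Rinv_lt_contravar.
    apply Rmult_lt_0_compat. apply Rinv_0_lt_compat; auto. lra. lra. rewrite Rinv_inv. lra. }
  replace (IZR z / (INR u + 1) - r) with ((IZR z - r * (INR u + 1)) / (INR u + 1))
    by (field; lra).
  assert (Hinv : 0 < / (INR u + 1)) by (apply Rinv_0_lt_compat; lra).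
  unfold Rdiv. rewrite Rabs_right by (apply Rle_ge, Rmult_le_pos; lra).
  apply Rle_lt_trans with (1 * / (INR u + 1)); [apply Rmult_le_compat_r|]; lra.
Qed.

(** Every function on [0, K) is the restriction of some [decode_fin K m]. *)
Fixpoint decode_fin (K m : nat) : nat -> nat :=
  match K with
  | O => fun _ => O
  | S K' => let (a, b) := Cantor.of_nat m in
            fun i => if Nat.eqb i K' then a else decode_fin K' b i
  end.

Lemma decode_fin_surj K (h : nat -> nat) :
  exists m, forall i, (i < K)%nat -> decode_fin K m i = h i.
Proof.
  induction K. exists O; intros; lia.
  destruct IHK as [m Hm]. exists (Cantor.to_nat (h K, m)). intros i Hi. cbn [decode_fin].
  rewrite Cantor.cancel_of_to. destruct (Nat.eqb_spec i K). now subst. apply Hm; lia.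
Qed.

Definition rat_seq (n : nat) : seqRVS :=
  let (K, m) := Cantor.of_nat n in fun i => if Nat.ltb i K then rat_of (decode_fin K m i) else 0.

Lemma rat_seq_support n : exists K, forall i, (K <= i)%nat -> rat_seq n i = 0.
Proof.
  exists (fst (Cantor.of_nat n)). intros i Hi. unfold rat_seq.
  destruct (Cantor.of_nat n) as [K m]. simpl in Hi. destruct (Nat.ltb_spec i K); auto; lia.
Qed.

Lemma rat_seq_approx K (c : nat -> R) (tol : nat -> R) : (forall i, 0 < tol i) ->
  exists n, forall i, ((K <= i)%nat -> rat_seq n i = 0) /\
                      ((i < K)%nat -> Rabs (rat_seq n i - c i) < tol i).
Proof.
  intros Htol.
  assert (Hh : forall i, {k | Rabs (rat_of k - c i) < tol i})
    by (intros i; apply constructive_indefinite_description, rat_of_dense, Htol).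
  destruct (decode_fin_surj K (fun i => proj1_sig (Hh i))) as [m Hm].
  exists (Cantor.to_nat (K, m)). intros i. unfold rat_seq. rewrite Cantor.cancel_of_to.
  destruct (Nat.ltb_spec i K); split; intros; try lia; auto.
  rewrite Hm by auto. apply (proj2_sig (Hh i)).
Qed.

(** * Partial sums Σ_(i<n) c_i f_i and truncations of coefficient sequences *)

Definition psum {V : RVS} (f : nat -> V) (c : seqRVS) (n : nat) : V :=
  vsum n (fun i => vscal (c i) (f i)).

Definition trunc (K : nat) (c : seqRVS) : seqRVS := fun i => if Nat.ltb i K then c i else 0.

Lemma seq_sub_apply (c d : seqRVS) i : vsub c d i = c i - d i.
Proof. reflexivity. Qed.

Lemma trunc_support K c i : (K <= i)%nat -> trunc K c i = 0.
Proof. intros Hi. unfold trunc. destruct (Nat.ltb_spec i K); auto; lia. Qed.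

Lemma trunc_low K c i : (i < K)%nat -> trunc K c i = c i.
Proof. intros Hi. unfold trunc. destruct (Nat.ltb_spec i K); auto; lia. Qed.

Lemma vsum_ecan (a : seqRVS) n : @vsum seqRVS n (fun i => vscal (a i) (e_can i)) = trunc n a.
Proof.
  apply functional_extensionality. intros j. induction n.
  - symmetry. apply trunc_support; lia.
  - transitivity (@vsum seqRVS n (fun i => vscal (a i) (e_can i)) j + a n * e_can n j).
    reflexivity. rewrite IHn. unfold trunc, e_can.
    destruct (Nat.eqb_spec n j); destruct (Nat.ltb_spec j n); destruct (Nat.ltb_spec j (S n));
      try lia; subst; lra.
Qed.

Lemma ecan_support i j : (S i <= j)%nat -> e_can i j = 0.
Proof. intros Hj. unfold e_can. destruct (Nat.eqb_spec i j); auto; lia. Qed.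

Section PartialSums.
Context {V : RVS} (f : nat -> V).

Lemma psum_ext c d n : (forall i, (i < n)%nat -> c i = d i) -> psum f c n = psum f d n.
Proof. intros. unfold psum. apply vsum_ext. intros. now rewrite H. Qed.

Lemma psum_add c d n : psum f (vadd c d) n = vadd (psum f c n) (psum f d n).
Proof. unfold psum. rewrite <- vsum_add. apply vsum_ext. intros. apply vscal_adds. Qed.

Lemma psum_scal a c n : psum f (vscal a c) n = vscal a (psum f c n).
Proof.
  unfold psum. rewrite <- vsum_scal. apply vsum_ext. intros. simpl. now rewrite vscal_assoc.
Qed.

Lemma psum_sub c d n : psum f (vsub c d) n = vsub (psum f c n) (psum f d n).
Proof. rewrite !vsub_scal, <- psum_scal, <- psum_add. reflexivity. Qed.

Lemma psum_zero n : psum f (@vzero seqRVS) n = vzero.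
Proof.
  unfold psum. rewrite <- (@vsum_zero V n). apply vsum_ext; intros. apply vscal_0l.
Qed.

Lemma psum_step c i : vscal (c i) (f i) = vsub (psum f c (S i)) (psum f c i).
Proof. unfold psum; simpl. now rewrite vsub_addK. Qed.

Lemma psum_finite c K : (forall i, (K <= i)%nat -> c i = 0) ->
  forall n, (K <= n)%nat -> psum f c n = psum f c K.
Proof.
  intros Hc n Hn. induction Hn; auto. unfold psum in *; simpl.
  rewrite IHHn, Hc by lia. now rewrite vscal_0l, vadd_0r.
Qed.

Lemma psum_trunc K c n : psum f (trunc K c) n = psum f c (Nat.min n K).
Proof.
  destruct (le_lt_dec n K).
  - rewrite Nat.min_l by auto. apply psum_ext. intros. apply trunc_low; lia.
  - rewrite Nat.min_r by lia. rewrite (psum_finite _ K) by (auto using trunc_support; lia).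
    apply psum_ext. intros. apply trunc_low; lia.
Qed.

Lemma psum_ecan i n : (S i <= n)%nat -> psum f (e_can i) n = f i.
Proof.
  intros Hn. rewrite (psum_finite _ (S i)) by auto using ecan_support.
  unfold psum; simpl. fold (psum f (e_can i) i).
  rewrite (psum_ext (e_can i) (@vzero seqRVS)), psum_zero, vadd_0l.
  - unfold e_can. now rewrite Nat.eqb_refl, vscal_1.
  - intros j Hj. unfold e_can. simpl. destruct (Nat.eqb_spec i j); auto; lia.
Qed.

End PartialSums.

(** * The coefficient space of a Banach space
    Θ = { c | Σ c_i f_i converges in X }, with |||c||| = sup_n ||Σ_(i<n) c_i f_i||. *)
Section CoefficientSpace.
Context {V : RVS} (P : V -> Prop) (N : V -> R) (f : nat -> V).

Definition coef_space (c : seqRVS) : Prop := exists x, P x /\ conv_in N (psum f c) x.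

Definition coef_norm (c : seqRVS) : R := supn (fun n => N (psum f c n)).

(** The synthesis operator: the sum of Σ c_i f_i (0 when it diverges). *)
Definition synth (c : seqRVS) : V :=
  match excluded_middle_informative (coef_space c) with
  | left H => proj1_sig (constructive_indefinite_description _ H)
  | right _ => vzero
  end.

Hypothesis HX : Banach P N.
Hypothesis Hf : forall i, P (f i) /\ f i <> vzero.

Let HN : normed_space P N := Banach_normed P N HX.
Let HP : subspace P := proj1 HN.
Local Hint Extern 1 => in_subspace HP : core.

Lemma f_in i : P (f i). Proof. apply Hf. Qed.

(** Since f_i is nonzero, coordinates can be read off from single terms c_i f_i. *)
Lemma f_norm_pos i : 0 < N (f i).
Proof.
  destruct (Rle_lt_or_eq_dec _ _ (Nnn HN _ (f_in i))) as [H|H]; auto.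
  exfalso. apply (proj2 (Hf i)). apply (Ndef HN); auto. apply f_in.
Qed.

Lemma psum_in c n : P (psum f c n).
Proof. apply (Psum HP). intros. apply (Pscal HP), f_in. Qed.
Local Hint Resolve f_in psum_in : core.

Lemma coef_bounded c : coef_space c -> exists M, forall n, N (psum f c n) <= M.
Proof.
  intros [x [Hx C]]. destruct (C 1) as [n0 H0]. lra.
  assert (Hnn : forall j, 0 <= N (psum f c j)) by (intros; apply (Nnn HN); auto).
  exists (N x + 1 + rsum n0 (fun i => N (psum f c i))). intros n.
  pose proof (rsum_nonneg n0 _ Hnn). pose proof (Nnn HN x Hx).
  destruct (le_lt_dec n0 n) as [Hn|Hn].
  - specialize (H0 n Hn). pose proof (Nle_sub HN (psum f c n) x ltac:(auto) Hx). lra.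
  - pose proof (rsum_term n0 _ n Hnn Hn). lra.
Qed.

Lemma coef_norm_ub c n : coef_space c -> N (psum f c n) <= coef_norm c.
Proof. intros H. apply (supn_ub (fun n => N (psum f c n))), coef_bounded, H. Qed.

Lemma coef_norm_le c M : (forall n, N (psum f c n) <= M) -> coef_norm c <= M.
Proof. apply (supn_le (fun n => N (psum f c n))). Qed.

Lemma coef_norm_nn c : coef_space c -> 0 <= coef_norm c.
Proof.
  intros H. pose proof (coef_norm_ub c O H) as H0. unfold psum in H0; simpl in H0.
  rewrite (Nzero HN) in H0; auto.
Qed.

Lemma limit_le_coef_norm c x : coef_space c -> P x -> conv_in N (psum f c) x ->
  N x <= coef_norm c.
Proof. intros Hc Hx C. apply (conv_le0 HN (psum f c) x); auto. intros; now apply coef_norm_ub. Qed.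

Lemma coord_bound c i : coef_space c -> Rabs (c i) <= 2 / N (f i) * coef_norm c.
Proof.
  intros Hc. pose proof (f_norm_pos i) as Hfi.
  assert (Rabs (c i) * N (f i) <= 2 * coef_norm c).
  { rewrite <- (Nscal HN) by auto. rewrite psum_step.
    eapply Rle_trans. apply (Nsub_le HN); auto.
    pose proof (coef_norm_ub c (S i) Hc). pose proof (coef_norm_ub c i Hc). lra. }
  apply (Rmult_le_reg_r (N (f i))); auto.
  replace (2 / N (f i) * coef_norm c * N (f i)) with (2 * coef_norm c) by (field; lra). auto.
Qed.

Lemma finite_coef c K : (forall i, (K <= i)%nat -> c i = 0) -> coef_space c.
Proof.
  intros Hc. exists (psum f c K). split; auto.
  apply (conv_eventually N (fun _ => psum f c K)).
  - exists K. intros n Hn. symmetry. now apply psum_finite.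
  - apply (conv_const HN); auto.
Qed.

Lemma trunc_coef K c : coef_space (trunc K c).
Proof. apply finite_coef with K. intros; now apply trunc_support. Qed.

(** Truncations converge to c in the coefficient norm (the Cauchy criterion for Σ c_i f_i). *)
Lemma coef_tail c : coef_space c -> forall e, 0 < e ->
  exists K0, forall K, (K0 <= K)%nat -> coef_norm (vsub (trunc K c) c) <= e.
Proof.
  intros [x [Hx C]] e He.
  destruct (conv_cauchy HN _ x (psum_in c) Hx C e He) as [K0 HK].
  exists K0. intros K HK0. apply coef_norm_le. intros n. rewrite psum_sub, psum_trunc.
  destruct (le_lt_dec n K).
  - rewrite Nat.min_l by auto. rewrite vsub_self, (Nzero HN); lra.
  - rewrite Nat.min_r by lia. left. apply HK; lia.
Qed.

Lemma coef_subspace : subspace coef_space.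
Proof.
  split; [|split].
  - apply finite_coef with O. reflexivity.
  - intros c d [x [Hx Cx]] [y [Hy Cy]]. exists (vadd x y). split; auto.
    apply conv_eventually with (u := fun n => vadd (psum f c n) (psum f d n)).
    exists O; intros; now rewrite psum_add. apply (conv_add HN); auto.
  - intros a c [x [Hx Cx]]. exists (vscal a x). split; auto.
    apply conv_eventually with (u := fun n => vscal a (psum f c n)).
    exists O; intros; now rewrite psum_scal. apply (conv_scal HN); auto.
Qed.
Local Hint Extern 1 => in_subspace coef_subspace : core.

Lemma coord_dist c d i : coef_space c -> coef_space d ->
  Rabs (c i - d i) <= 2 / N (f i) * coef_norm (vsub c d).
Proof. intros. rewrite <- seq_sub_apply. apply coord_bound; auto. Qed.

Lemma coef_is_norm : is_norm_on coef_space coef_norm.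
Proof.
  split; [|split; [|split]].
  - apply coef_norm_nn.
  - intros c Hc H0. apply functional_extensionality. intros i.
    pose proof (coord_bound c i Hc) as Hi. rewrite H0, Rmult_0_r in Hi.
    destruct (Req_dec (c i) 0); auto. pose proof (Rabs_pos_lt (c i)). simpl; lra.
  - intros a c Hc. unfold coef_norm.
    rewrite <- supn_scal; [| apply Rabs_pos | now apply coef_bounded].
    f_equal. apply functional_extensionality. intros n. rewrite psum_scal, (Nscal HN); auto.
  - intros c d Hc Hd. apply coef_norm_le. intros n. rewrite psum_add.
    eapply Rle_trans. apply (Ntri HN); auto.
    pose proof (coef_norm_ub c n Hc). pose proof (coef_norm_ub d n Hd). lra.
Qed.

Let HC : normed_space coef_space coef_norm := conj coef_subspace coef_is_norm.

Lemma psum_conv_coef (u : nat -> seqRVS) c n :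
  (forall i, Un_cv (fun k => u k i) (c i)) -> conv_in N (fun k => psum f (u k) n) (psum f c n).
Proof.
  intros Hcv. induction n.
  - unfold psum; simpl. apply (conv_const HN); auto.
  - unfold psum; simpl. fold (psum f c n). apply (conv_add HN); auto.
    { intros; apply psum_in. }
    intros e He. pose proof (f_norm_pos n) as Hfp.
    destruct (Hcv n (e / N (f n))) as [k0 Hk0]. apply Rdiv_lt_0_compat; auto.
    exists k0. intros k Hk. rewrite vsub_scals, (Nscal HN); auto. specialize (Hk0 k Hk).
    unfold R_dist in Hk0. apply (Rmult_lt_compat_r (N (f n))) in Hk0; auto.
    replace (e / N (f n) * N (f n)) with e in Hk0 by (field; lra). lra.
Qed.

Lemma coef_cauchy_coord (u : nat -> seqRVS) i : (forall k, coef_space (u k)) ->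
  cauchy_in coef_norm u -> Cauchy_crit (fun k => u k i).
Proof.
  intros Hu Hc e He. pose proof (f_norm_pos i) as Hfp.
  destruct (Hc (e * N (f i) / 2)) as [k0 Hk0]. apply Rdiv_lt_0_compat; [nra|lra].
  exists k0. intros n m Hn Hm. unfold R_dist.
  pose proof (coord_dist (u n) (u m) i (Hu n) (Hu m)). specialize (Hk0 n m Hn Hm).
  assert (2 / N (f i) * coef_norm (vsub (u n) (u m)) < 2 / N (f i) * (e * N (f i) / 2))
    by (apply Rmult_lt_compat_l; auto; apply Rdiv_lt_0_compat; lra).
  replace (2 / N (f i) * (e * N (f i) / 2)) with e in H0 by (field; lra). lra.
Qed.

Lemma coef_psum_uniform (u : nat -> seqRVS) c : (forall k, coef_space (u k)) ->
  cauchy_in coef_norm u -> (forall i, Un_cv (fun k => u k i) (c i)) ->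
  forall e, 0 < e -> exists k0, forall k, (k0 <= k)%nat -> forall n,
    N (vsub (psum f (u k) n) (psum f c n)) <= e.
Proof.
  intros Hu Hc Hcv e He. destruct (Hc e He) as [k0 Hk0]. exists k0. intros k Hk n.
  rewrite (Nsym HN) by auto.
  apply (conv_le HN (fun m => psum f (u m) n) (psum f c n) (psum f (u k) n) e k0); auto.
  - apply psum_conv_coef; auto.
  - intros m Hm. rewrite <- psum_sub. left. eapply Rle_lt_trans.
    apply coef_norm_ub; auto. apply Hk0; auto.
Qed.

Lemma coef_complete : complete_in coef_space coef_norm.
Proof.
  intros u Hu Hc.
  set (c := fun i => proj1_sig (R_complete _ (coef_cauchy_coord u i Hu Hc))).
  assert (Hcv : forall i, Un_cv (fun k => u k i) (c i)).
  { intros i. unfold c. destruct R_complete; simpl; auto. }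
  pose proof (coef_psum_uniform u c Hu Hc Hcv) as Hunif.
  assert (Hcc : cauchy_in N (psum f c)).
  { intros e He. destruct (Hunif (e/3)) as [k0 Hk0]. lra.
    destruct (Hu k0) as [y [Hy Cy]].
    destruct (conv_cauchy HN _ y (psum_in _) Hy Cy (e/3)) as [n1 Hn1]. lra.
    exists n1. intros n m Hn Hm.
    pose proof (Nchain HN (psum f c n) (psum f (u k0) n) (psum f c m)
      ltac:(auto) ltac:(auto) ltac:(auto)) as H1.
    pose proof (Nchain HN (psum f (u k0) n) (psum f (u k0) m) (psum f c m)
      ltac:(auto) ltac:(auto) ltac:(auto)) as H2.
    rewrite (Nsym HN (psum f c n) (psum f (u k0) n)) in H1 by auto.
    pose proof (Hk0 k0 (le_n _) n). pose proof (Hk0 k0 (le_n _) m).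
    specialize (Hn1 n m Hn Hm). lra. }
  destruct (proj2 (proj2 HX) _ (psum_in c) Hcc) as [x [Hx Cx]].
  exists c. split. exists x; auto.
  intros e He. destruct (Hunif (e/2)) as [k0 Hk0]. lra. exists k0. intros k Hk.
  apply Rle_lt_trans with (e/2); [|lra]. apply coef_norm_le. intros n.
  rewrite psum_sub. apply Hk0; auto.
Qed.

Lemma coef_Banach : Banach coef_space coef_norm.
Proof. split; [apply coef_subspace|split; [apply coef_is_norm|apply coef_complete]]. Qed.

Lemma coef_BK : BKspace coef_space coef_norm.
Proof.
  split. apply coef_Banach. intros i. exists (2 / N (f i)). intros c Hc. now apply coord_bound.
Qed.

Lemma coef_schauder : SchauderBasis coef_space coef_norm e_can.
Proof.
  split. intros i. apply finite_coef with (S i). apply ecan_support.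
  intros c Hc. exists c. split.
  - intros e He. destruct (coef_tail c Hc (e/2)) as [K0 HK]. lra. exists K0. intros n Hn.
    rewrite vsum_ecan. specialize (HK n Hn). lra.
  - intros a Ha. apply functional_extensionality. intros i.
    destruct (Req_dec (c i) (a i)) as [|Hne]; auto. exfalso.
    set (e := Rabs (a i - c i)). assert (He : 0 < e) by (apply Rabs_pos_lt; lra).
    pose proof (f_norm_pos i) as Hfp.
    destruct (Ha (e * N (f i) / 2)) as [n0 Hn0]. apply Rdiv_lt_0_compat; [nra|lra].
    set (n := max n0 (S i)). specialize (Hn0 n ltac:(lia)). rewrite vsum_ecan in Hn0.
    pose proof (coord_dist (trunc n a) c i (trunc_coef _ _) Hc) as Hco.
    rewrite trunc_low in Hco by lia. fold e in Hco.
    assert (2 / N (f i) * coef_norm (vsub (trunc n a) c) < 2 / N (f i) * (e * N (f i) / 2))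
      by (apply Rmult_lt_compat_l; auto; apply Rdiv_lt_0_compat; lra).
    replace (2 / N (f i) * (e * N (f i) / 2)) with e in H by (field; lra). lra.
Qed.

Lemma coef_norm_finite_bound (w : seqRVS) K b : (forall i, (K <= i)%nat -> w i = 0) ->
  (forall i, (i < K)%nat -> Rabs (w i) * N (f i) <= b) -> coef_norm w <= INR K * b.
Proof.
  intros HK Hb. apply coef_norm_le. intros n. unfold psum.
  eapply Rle_trans. apply (Nsum HN). intros; auto.
  assert (Hg : forall i, 0 <= N (vscal (w i) (f i))) by (intros; apply (Nnn HN); auto).
  eapply Rle_trans. apply (rsum_support n K); auto.
  - intros i Hi. rewrite HK by auto. rewrite vscal_0l, (Nzero HN); auto.
  - rewrite <- rsum_const. apply rsum_le. intros i Hi. rewrite (Nscal HN); auto.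
Qed.

Lemma coef_separable : separable_in coef_space coef_norm.
Proof.
  exists rat_seq. split.
  { intros n. destruct (rat_seq_support n) as [K HK]. now apply finite_coef with K. }
  intros c Hc e He.
  destruct (coef_tail c Hc (e/2)) as [K HK]. lra. specialize (HK K (le_n _)).
  pose proof (pos_INR K) as HK0.
  set (tol i := e / (4 * (INR K + 1) * (N (f i) + 1))).
  assert (Htol : forall i, 0 < tol i).
  { intros i. pose proof (f_norm_pos i). apply Rdiv_lt_0_compat; auto.
    apply Rmult_lt_0_compat; lra. }
  destruct (rat_seq_approx K c tol Htol) as [n Hn]. exists n.
  assert (Hd : coef_space (rat_seq n)) by (apply finite_coef with K; apply Hn).
  assert (Happrox : coef_norm (vsub (rat_seq n) (trunc K c)) <= INR K * (e / (4 * (INR K + 1)))).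
  { apply coef_norm_finite_bound; intros i Hi; rewrite seq_sub_apply.
    - rewrite (proj1 (Hn i)), trunc_support by auto. ring.
    - rewrite trunc_low by auto. pose proof (f_norm_pos i).
      apply Rle_trans with (tol i * N (f i)).
      { apply Rmult_le_compat_r. lra. left; apply (Hn i); auto. }
      unfold tol. replace (e / (4 * (INR K + 1) * (N (f i) + 1)) * N (f i))
        with (e / (4 * (INR K + 1)) * (N (f i) / (N (f i) + 1))) by (field; lra).
      rewrite <- (Rmult_1_r (e / (4 * (INR K + 1)))) at 2.
      apply Rmult_le_compat_l. apply Rlt_le, Rdiv_lt_0_compat; lra. apply frac_le1; lra. }
  assert (INR K * (e / (4 * (INR K + 1))) <= e / 4).
  { replace (INR K * (e / (4 * (INR K + 1)))) with (e / 4 * (INR K / (INR K + 1)))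
      by (field; lra).
    rewrite <- (Rmult_1_r (e/4)) at 2. apply Rmult_le_compat_l. lra. apply frac_le1; lra. }
  rewrite (vsub_chain (rat_seq n) (trunc K c) c).
  eapply Rle_lt_trans. apply (Ntri HC); auto using trunc_coef. lra.
Qed.

Theorem coef_CB : CBspace coef_space coef_norm.
Proof. split. apply coef_BK. apply coef_schauder. Qed.

Lemma synth_spec c x : P x -> conv_in N (psum f c) x -> synth c = x.
Proof.
  intros Hx C. unfold synth. destruct excluded_middle_informative as [H|H].
  - destruct constructive_indefinite_description as [y [Hy Cy]]. simpl.
    apply (conv_unique HN (psum f c)); auto.
  - exfalso. apply H. exists x; auto.
Qed.

Lemma synth_conv c : coef_space c -> P (synth c) /\ conv_in N (psum f c) (synth c).
Proof. intros [x [Hx C]]. rewrite (synth_spec c x); auto. Qed.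

Lemma synth_add c d : coef_space c -> coef_space d -> synth (vadd c d) = vadd (synth c) (synth d).
Proof.
  intros Hc Hd. destruct (synth_conv c Hc) as [H1 C1]. destruct (synth_conv d Hd) as [H2 C2].
  apply synth_spec; auto.
  apply conv_eventually with (u := fun n => vadd (psum f c n) (psum f d n)).
  exists O; intros; now rewrite psum_add. apply (conv_add HN); auto.
Qed.

Lemma synth_scal a c : coef_space c -> synth (vscal a c) = vscal a (synth c).
Proof.
  intros Hc. destruct (synth_conv c Hc) as [H1 C1]. apply synth_spec; auto.
  apply conv_eventually with (u := fun n => vscal a (psum f c n)).
  exists O; intros; now rewrite psum_scal. apply (conv_scal HN); auto.
Qed.

Lemma synth_bound c : coef_space c -> N (synth c) <= coef_norm c.
Proof. intros Hc. destruct (synth_conv c Hc). now apply limit_le_coef_norm. Qed.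

Lemma synth_ecan i : synth (e_can i) = f i.
Proof.
  apply synth_spec; auto. apply conv_eventually with (u := fun _ => f i).
  - exists (S i). intros n Hn. symmetry. now apply psum_ecan.
  - apply (conv_const HN); auto.
Qed.

End CoefficientSpace.

(** * The sequence of coefficient spaces Θ_s of the X_s *)
Section CoefficientSequence.
Context {V : RVS} (P : nat -> V -> Prop) (N : nat -> V -> R) (f : nat -> V).
Hypothesis HF : Fsequence P N.
Hypothesis Hf : forall i, f i <> vzero /\ inF P (f i).

Lemma Banach_s s : Banach (P s) (N s). Proof. apply HF. Qed.
Lemma normed_s s : normed_space (P s) (N s). Proof. apply Banach_normed, Banach_s. Qed.
Lemma subspace_s s : subspace (P s). Proof. apply normed_s. Qed.
Local Hint Extern 1 => match goal with |- P ?s _ => in_subspace (subspace_s s) end : core.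

Lemma f_admissible s i : P s (f i) /\ f i <> vzero.
Proof. split; apply Hf. Qed.

Lemma f_in_all s i : P s (f i). Proof. apply Hf. Qed.
Local Hint Resolve f_in_all : core.

Lemma P_mono s t x : (s <= t)%nat -> P t x -> P s x.
Proof. intros H. induction H; auto. intros Hx. apply IHle. apply HF; auto. Qed.

Lemma N_mono s t x : (s <= t)%nat -> P t x -> N s x <= N t x.
Proof.
  intros H. induction H; intros Hx. lra.
  eapply Rle_trans. apply IHle. apply HF; auto. apply HF; auto.
Qed.

Lemma conv_mono s t u x : (s <= t)%nat -> (forall n, P t (u n)) -> P t x ->
  conv_in (N t) u x -> conv_in (N s) u x.
Proof.
  intros Hst Hu Hx C e He. destruct (C e He) as [n0 H0]. exists n0. intros n Hn.
  eapply Rle_lt_trans. apply (N_mono s t _ Hst). apply (Psub (subspace_s t)); auto.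
  apply H0; auto.
Qed.

Lemma psum_in_s s c n : P s (psum f c n).
Proof. apply (psum_in (P s) (N s) f (Banach_s s) (f_admissible s)). Qed.
Local Hint Resolve psum_in_s : core.

Definition Theta (s : nat) : seqRVS -> Prop := coef_space (P s) (N s) f.
Definition Theta_norm (s : nat) : seqRVS -> R := coef_norm (N s) f.

Lemma finite_Theta c K : (forall i, (K <= i)%nat -> c i = 0) -> inF Theta c.
Proof. intros Hc s. apply (finite_coef _ _ f (Banach_s s) (f_admissible s) c K Hc). Qed.

Theorem Theta_CBF : CBFsequence Theta Theta_norm.
Proof.
  split; [intros s; apply coef_CB; auto using Banach_s, f_admissible|].
  split; [|split; [|split; [|split]]].
  - intros s. split. apply coef_Banach; auto using Banach_s, f_admissible.
    apply coef_separable; auto using Banach_s, f_admissible.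
  - intros s c [x [Hx C]]. exists x. split. apply HF; auto.
    apply (conv_mono s (S s)); auto.
  - exists (e_can 0). split.
    + intros H. assert (e_can 0 0%nat = (@vzero seqRVS) 0%nat) by now rewrite H.
      unfold e_can in H0. simpl in H0. lra.
    + apply finite_Theta with 1%nat. apply ecan_support.
  - intros s c Hc. apply coef_norm_le. intros n. eapply Rle_trans. apply HF; auto.
    apply (coef_norm_ub (P (S s))); auto using Banach_s, f_admissible.
  - intros s c Hc e He.
    destruct (coef_tail (P s) (N s) f (Banach_s s) (f_admissible s) c Hc (e/2)) as [K HK]. lra.
    exists (trunc K c). split. apply finite_Theta with K. intros; now apply trunc_support.
    specialize (HK K (le_n _)). unfold Theta_norm. lra.
Qed.

(** The synthesis operators of the X_s agree: a sum in X_s is also the sum in X_0. *)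
Lemma synth_consistent s c : Theta s c -> synth (P 0) (N 0) f c = synth (P s) (N s) f c.
Proof.
  intros Hc. destruct (synth_conv (P s) (N s) f (Banach_s s) (f_admissible s) c Hc) as [Hx C].
  apply (synth_spec _ _ f (Banach_s 0) (f_admissible 0)).
  - apply (P_mono 0 s); auto; lia.
  - apply (conv_mono 0 s); auto; lia.
Qed.

Context (g : nat -> V -> R).
Hypothesis Hg : forall i, ContLinFun (P 0%nat) (N 0%nat) (g i).
Hypothesis Hexp : forall s x, P s x ->
  conv_in (N s) (fun n => vsum n (fun i => vscal (g i x) (f i))) x.

Definition analysis (x : V) : seqRVS := fun i => g i x.

Lemma analysis_add s x y : P s x -> P s y -> analysis (vadd x y) = vadd (analysis x) (analysis y).
Proof.
  intros. apply functional_extensionality. intros i. apply (Hg i); apply (P_mono 0 s); auto; lia.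
Qed.

Lemma analysis_scal s a x : P s x -> analysis (vscal a x) = vscal a (analysis x).
Proof.
  intros. apply functional_extensionality. intros i. apply (Hg i); apply (P_mono 0 s); auto; lia.
Qed.

(** Each g_i is continuous on X_s, since ||.||_0 <= ||.||_s. *)
Lemma g_bound s i : exists C, 0 <= C /\ forall x, P s x -> Rabs (g i x) <= C * N s x.
Proof.
  destruct (Hg i) as [_ [_ [C HC]]]. exists (Rabs C). split. apply Rabs_pos.
  intros x Hx. assert (P 0 x) by (apply (P_mono 0 s); auto; lia).
  eapply Rle_trans. apply HC; auto. pose proof (N_mono 0 s x ltac:(lia) Hx).
  pose proof (Nnn (normed_s 0) x H). pose proof (Rle_abs C). pose proof (Rabs_pos C). nra.
Qed.

Lemma analysis_Theta s x : P s x -> Theta s (analysis x).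
Proof. intros. exists x. split; auto. apply Hexp; auto. Qed.

Lemma synth_analysis s x : P s x -> synth (P s) (N s) f (analysis x) = x.
Proof.
  intros Hx. apply (synth_spec _ _ f (Banach_s s) (f_admissible s)); auto. apply Hexp; auto.
Qed.

Lemma partial_sum_bounded s n : exists L, forall x, P s x ->
  N s (psum f (analysis x) n) <= L * N s x.
Proof.
  induction n.
  - exists 0. intros x Hx. unfold psum; simpl. rewrite (Nzero (normed_s s)).
    pose proof (Nnn (normed_s s) x Hx). lra.
  - destruct IHn as [L HL]. destruct (g_bound s n) as [C [HC0 HC]].
    pose proof (Nnn (normed_s s) _ (f_in_all s n)).
    exists (L + C * N s (f n)). intros x Hx. unfold psum; simpl. fold (psum f (analysis x) n).
    eapply Rle_trans. apply (Ntri (normed_s s)); auto.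
    rewrite (Nscal (normed_s s)) by auto. change (analysis x n) with (g n x).
    pose proof (Rmult_le_compat_r _ _ _ H (HC x Hx)). specialize (HL x Hx). lra.
Qed.

Lemma partial_sums_uniformly_bounded s : exists B, forall n x, P s x ->
  N s (psum f (analysis x) n) <= B * N s x.
Proof.
  apply (uniform_boundedness (normed_s s) (proj2 (proj2 (Banach_s s))) (normed_s s)
           (fun n x => psum f (analysis x) n)); intros; auto.
  - now rewrite (analysis_add s), psum_add.
  - now rewrite (analysis_scal s), psum_scal.
  - apply partial_sum_bounded.
  - apply (coef_bounded (P s) (N s) f (Banach_s s) (f_admissible s)), analysis_Theta; auto.
Qed.

Lemma frame_bounds s : exists A B, 0 < A /\ A <= B /\ forall x, P s x ->
  A * N s x <= Theta_norm s (analysis x) /\ Theta_norm s (analysis x) <= B * N s x.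
Proof.
  destruct (partial_sums_uniformly_bounded s) as [B HB].
  exists 1, (Rmax 1 B). split; [lra|split; [apply Rmax_l|]]. intros x Hx. split.
  - rewrite Rmult_1_l. apply (limit_le_coef_norm _ _ f (Banach_s s) (f_admissible s)); auto.
    apply analysis_Theta; auto. apply Hexp; auto.
  - apply coef_norm_le. intros n. eapply Rle_trans. apply HB; auto.
    apply Rmult_le_compat_r. apply (Nnn (normed_s s)); auto. apply Rmax_r.
Qed.

Theorem analysis_FFrame : FFrame P N Theta Theta_norm g.
Proof.
  set (synth0 := synth (P 0) (N 0) f).
  assert (Hsynth : forall c, inF Theta c -> forall s, synth0 c = synth (P s) (N s) f c)
    by (intros c Hc s; apply synth_consistent, Hc).
  split; [|split; [|split]].
  - intros i. destruct (Hg i) as [Ha [Hs [C HC]]]. split; [|split].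
    + intros x y Hx Hy; apply Ha; auto.
    + intros a x Hx; apply Hs; auto.
    + exists 0%nat, C. intros x Hx; apply HC; auto.
  - intros x Hx s. apply analysis_Theta, Hx.
  - intros s. destruct (frame_bounds s) as [A [B [HA [HAB Hframe]]]].
    exists A, B. split; [exact HA|split; [exact HAB|]]. intros x Hx. exact (Hframe x (Hx s)).
  - exists synth0. split; [|split; [|split; [|split]]].
    + intros c d Hc Hd. apply (synth_add _ _ f (Banach_s 0) (f_admissible 0)); [apply Hc|apply Hd].
    + intros a c Hc. apply (synth_scal _ _ f (Banach_s 0) (f_admissible 0)), Hc.
    + intros c Hc s. rewrite (Hsynth c Hc s).
      apply (synth_conv _ _ f (Banach_s s) (f_admissible s)), Hc.
    + intros x Hx. apply (synth_analysis 0), Hx.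
    + intros s. exists 1. intros c Hc. rewrite Rmult_1_l, (Hsynth c Hc s).
      apply (synth_bound _ _ f (Banach_s s) (f_admissible s)), Hc.
Qed.

Theorem synth_DFBessel : DFBessel P N Theta Theta_norm f.
Proof.
  intros s. set (synth_s := synth (P s) (N s) f).
  assert (Hconv := synth_conv _ _ f (Banach_s s) (f_admissible s)).
  assert (Hbound := synth_bound _ _ f (Banach_s s) (f_admissible s)).
  exists 1. intros h [Ha [Hs [C HC]]]. exists (fun c => h (synth_s c)). split; [|split].
  - split; [|split].
    + intros c d Hc Hd. unfold synth_s.
      rewrite (synth_add _ _ f (Banach_s s) (f_admissible s)) by auto.
      apply Ha; apply Hconv; auto.
    + intros a c Hc. unfold synth_s.
      rewrite (synth_scal _ _ f (Banach_s s) (f_admissible s)) by auto. apply Hs, Hconv; auto.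
    + exists (Rabs C). intros c Hc. destruct (Hconv c Hc) as [H1 _].
      eapply Rle_trans. apply HC; auto. pose proof (Hbound c Hc). unfold synth_s, Theta_norm.
      pose proof (Nnn (normed_s s) _ H1). pose proof (Rle_abs C). pose proof (Rabs_pos C). nra.
  - intros i. unfold synth_s. now rewrite (synth_ecan _ _ f (Banach_s s) (f_admissible s)).
  - intros M HM Hop c Hc. destruct (Hconv c Hc) as [H1 _].
    eapply Rle_trans. apply Hop; auto. pose proof (Hbound c Hc). unfold synth_s, Theta_norm.
    nra.
Qed.

End CoefficientSequence.

Theorem proposition4p1 (V : RVS) (P : nat -> V -> Prop) (N : nat -> V -> R)
  (g : nat -> V -> R) (f : nat -> V) :
  Fsequence P N ->
  (forall i, ContLinFun (P 0%nat) (N 0%nat) (g i)) ->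
  (forall i, f i <> vzero /\ inF P (f i)) ->
  (forall s x, P s x -> conv_in (N s) (fun n => vsum n (fun i => vscal (g i x) (f i))) x) ->
  exists (T : nat -> seqRVS -> Prop) (Nt : nat -> seqRVS -> R),
    CBFsequence T Nt /\ FFrame P N T Nt g /\ DFBessel P N T Nt f.
Proof.
  intros HF Hg Hf Hexp. exists (Theta P N f), (Theta_norm N f). split; [|split].
  - apply Theta_CBF; auto.
  - apply analysis_FFrame; auto.
  - apply synth_DFBessel; auto.
Qed.
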